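(* Let $\{a_n[e^{-x}]\}_L=\{2^{-n}\}=1,\tfrac12,\tfrac14,\dots$. Then \[ \{a_n[e^{-x}]\}_L=\sum_{k=0}^{\infty}(-1)^k\{a_n[x^k/k!]\}_R , \] where for each index $n$ the (in general divergent) series $\sum_{k\ge0}(-1)^k a_n[x^k/k!]_R$ is interpreted as an Abel sum, i.e. its value is $\lim_{t\to1^-}\sum_{k\ge0}(-1)^k a_n[x^k/k!]_R\,t^k$.
   Context: Sequences are indexed by $n=0,1,2,\dots$. The right integral is $\mathcal{I}_R^0\{a_n\}=\{\sum_{j=0}^{n}a_j\}$. Define $\{a_n[x^0/0!]\}_R=\{1\}$, $\{a_n[x^1/1!]\}_R=\{n\}=0,1,2,\dots$, and for $k\ge2$, $\{a_n[x^k/k!]\}_R=(\mathcal{I}_R^0)^{k-1}\{n\}$; $a_n[x^k/k!]_R$ denotes the $n$-th term of $\{a_n[x^k/k!]\}_R$. *)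

From Stdlib Require Import Reals.
From Coquelicot Require Import Coquelicot.
Open Scope R_scope.

Definition sequence := nat -> R.

Definition right_integral (a : sequence) : sequence :=
  fun n => sum_f_R0 a n.

(* {a_n[x^k/k!]}_R :  k=0 -> {1};  k=1 -> {n};  k>=2 -> (I_R^0)^(k-1) {n} *)
Definition aR (k : nat) : sequence :=
  match k with
  | O => fun _ => 1
  | S k' => Nat.iter k' right_integral (fun n => INR n)
  end.

Definition aL_expneg : sequence := fun n => / 2 ^ n.

Definition abel_sum (c : nat -> R) (s : R) : Prop :=
  (forall t, 0 < t < 1 -> ex_series (fun k => c k * t ^ k)) /\
  filterlim (fun t => Series (fun k => c k * t ^ k)) (at_left 1) (locally s).

(* With the convention [aR k n = aR (k-1) n + aR k (n-1)] (Pascal's rule), the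
   generating function [sum_k aR k n x^k] equals [1/(1-x)^n] for [|x| < 1]:
   passing from [n] to [n+1] takes partial sums in [k], i.e. multiplies the
   generating function by the geometric series [1/(1-x)].  Substituting
   [x = -t] gives [sum_k (-1)^k aR k n t^k = 1/(1+t)^n], which is continuous
   at [t = 1] with value [2^-n]. *)
From Stdlib Require Import Reals Lra Lia.
From Coquelicot Require Import Coquelicot.
Open Scope R_scope.

Lemma aR_at0 (k : nat) : aR k 0%nat = 0 ^ k.
Proof.
  destruct k as [|k]; [reflexivity|].
  rewrite pow_i by lia.
  induction k as [|k IHk]; [reflexivity|].
  exact IHk.
Qed.

Lemma aR_pascal (k n : nat) : aR (S k) (S n) = aR (S k) n + aR k (S n).
Proof.
  destruct k as [|k].
  - apply S_INR.
  - reflexivity.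
Qed.

Lemma aR_succ_sum (k n : nat) : aR k (S n) = sum_f_R0 (fun j => aR j n) k.
Proof.
  induction k as [|k IHk]; [reflexivity|].
  rewrite aR_pascal, IHk; simpl; ring.
Qed.

Lemma aR_nonneg (k n : nat) : 0 <= aR k n.
Proof.
  revert k; induction n as [|n IHn]; intros k.
  - rewrite aR_at0; destruct k; simpl; lra.
  - rewrite aR_succ_sum; apply cond_pos_sum; auto.
Qed.

Lemma is_series_partial_sums_geom (a : nat -> R) (x A : R) :
  Rabs x < 1 ->
  is_series (fun k => a k * x ^ k) A ->
  ex_series (fun k => Rabs (a k * x ^ k)) ->
  is_series (fun k => sum_f_R0 a k * x ^ k) (A / (1 - x)).
Proof.
  intros Hx HA Habs.
  assert (Hgeom_abs : ex_series (fun k => Rabs (x ^ k))).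
  { exists (/ (1 - Rabs x)).
    apply (is_series_ext (fun k => Rabs x ^ k)).
    - intros k; apply RPow_abs.
    - apply is_series_geom; rewrite Rabs_Rabsolu; exact Hx. }
  eapply is_series_ext;
    [| exact (is_series_mult _ _ _ _ HA (is_series_geom x Hx) Habs Hgeom_abs)].
  intros k; rewrite Rmult_comm, scal_sum.
  apply sum_eq; intros j Hj.
  rewrite Rmult_assoc, <- pow_add.
  do 3 f_equal; lia.
Qed.

Lemma is_series_aR_pow (n : nat) (x : R) :
  Rabs x < 1 -> is_series (fun k => aR k n * x ^ k) (/ (1 - x) ^ n).
Proof.
  revert x; induction n as [|n IHn]; intros x Hx.
  - apply (is_series_ext (fun k => 0 ^ k)).
    + intros k; rewrite aR_at0; destruct k; simpl; ring.
    + replace (/ (1 - x) ^ 0) with (/ (1 - 0)) by (simpl; f_equal; ring).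
      apply is_series_geom; rewrite Rabs_R0; lra.
  - assert (Habs : ex_series (fun k => Rabs (aR k n * x ^ k))).
    { exists (/ (1 - Rabs x) ^ n).
      apply (is_series_ext (fun k => aR k n * Rabs x ^ k)).
      - intros k; rewrite Rabs_mult, RPow_abs, (Rabs_pos_eq _ (aR_nonneg k n)).
        reflexivity.
      - apply IHn; rewrite Rabs_Rabsolu; exact Hx. }
    replace (/ (1 - x) ^ S n) with (/ (1 - x) ^ n / (1 - x))
      by (simpl; rewrite Rinv_mult; unfold Rdiv; ring).
    apply (is_series_ext (fun k => sum_f_R0 (fun j => aR j n) k * x ^ k)).
    + intros k; rewrite aR_succ_sum; reflexivity.
    + exact (is_series_partial_sums_geom _ _ _ Hx (IHn x Hx) Habs).
Qed.

Lemma is_series_alternating_aR (n : nat) (t : R) :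
  0 <= t < 1 -> is_series (fun k => (-1) ^ k * aR k n * t ^ k) (/ (1 + t) ^ n).
Proof.
  intros Ht.
  replace (1 + t) with (1 - - t) by ring.
  apply (is_series_ext (fun k => aR k n * (- t) ^ k)).
  - intros k; change (aR k n * (- t) ^ k = (-1) ^ k * aR k n * t ^ k).
    replace (- t) with (-1 * t) by ring.
    rewrite Rpow_mult_distr; ring.
  - apply is_series_aR_pow; rewrite Rabs_Ropp, Rabs_pos_eq; lra.
Qed.

Lemma continuous_inv_pow_1_plus (n : nat) (t : R) :
  0 <= t -> continuous (fun s => / (1 + s) ^ n) t.
Proof.
  intros Ht.
  apply (ex_derive_continuous (V := R_NormedModule)).
  auto_derive.
  apply pow_nonzero; lra.
Qed.

Theorem mainTheorem11 :
  forall n : nat, abel_sum (fun k => (-1) ^ k * aR k n) (aL_expneg n).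
Proof.
  intros n; split.
  - intros t Ht; eexists; apply is_series_alternating_aR; lra.
  - apply (filterlim_ext_loc (fun t => / (1 + t) ^ n)).
    + exists (mkposreal _ Rlt_0_1); intros t Ht Ht1.
      apply Rabs_def2 in Ht; simpl in Ht.
      symmetry; apply is_series_unique, is_series_alternating_aR.
      unfold minus, plus, opp in Ht; simpl in Ht; lra.
    + eapply filterlim_filter_le_1; [apply filter_le_within |].
      unfold aL_expneg; replace 2 with (1 + 1) by ring.
      apply continuous_inv_pow_1_plus; lra.
Qed.
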